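(* Let $X$ be a real or complex Banach space, $(A(n))_{n\in\mathbb{N}}$ a sequence in $\mathcal{B}(X)$, and $P:\mathbb{N}\to\mathcal{B}(X)$ a family of projections compatible with the system $x_{n+1}=A(n)x_n$, with complementary family $Q(n)=I-P(n)$. Then the system is $P$-exponentially dichotomic if and only if there exist constants $D\ge1$, $d>0$ and $c\ge0$ such that \[ \sum_{j=n}^{\infty}e^{d(j-n)}\|\mathcal{A}_P(j,p)x\|+\sum_{k=n}^{m}e^{d(m-k)}\|\mathcal{A}_Q(k,n)x\|\le D\big(e^{cn}\|\mathcal{A}_P(n,p)x\|+e^{cm}\|\mathcal{A}_Q(m,n)x\|\big) \] for all $(m,n,p)\in T$ and all $x\in X$.
   Context: $\mathbb{N}$ denotes the set of positive integers; $\mathcal{B}(X)$ is the Banach algebra of bounded linear operators on $X$, and $I$ is the identity operator. $\Delta=\{(m,n)\in\mathbb{N}^2: m\ge n\}$ and $T=\{(m,n,p)\in\mathbb{N}^3: m\ge n\ge p\}$. A family of projections is a map $P:\mathbb{N}\to\mathcal{B}(X)$ with $P(n)^2=P(n)$ for all $n$; its complementary family is $Q(n)=I-P(n)$. $P$ is compatible with the system $x_{n+1}=A(n)x_n$ if $A(n+1)P(n)=P(n+1)A(n+1)$ for all $n\in\mathbb{N}$. For $(m,n)\in\Delta$ define $\mathcal{A}_P(m,n)=A(m)\cdots A(n+1)P(n)$ if $m>n$ and $\mathcal{A}_P(n,n)=P(n)$; similarly $\mathcal{A}_Q(m,n)=A(m)\cdots A(n+1)Q(n)$ if $m>n$ and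 $\mathcal{A}_Q(n,n)=Q(n)$. The system is $P$-exponentially dichotomic if there exist constants $N\ge1$, $\alpha>0$ and $\beta\ge0$ such that $e^{\alpha(m-n)}\big(\|\mathcal{A}_P(m,n)x\|+\|Q(n)x\|\big)\le N\big(e^{\beta n}\|P(n)x\|+e^{\beta m}\|\mathcal{A}_Q(m,n)x\|\big)$ for all $(m,n)\in\Delta$, $x\in X$. *)

From HB Require Import structures.
From mathcomp Require Import all_boot all_order all_algebra.
From mathcomp Require Import all_classical all_reals all_analysis.
Set Implicit Arguments. Unset Strict Implicit. Unset Printing Implicit Defensive.
Import Order.TTheory GRing.Theory Num.Theory.
Import numFieldNormedType.Exports.
Local Open Scope ring_scope.

Fixpoint Acomp {R : realType} {X : normedModType R} (A : nat -> X -> X)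
  (n k : nat) (x : X) : X :=
  match k with
  | 0 => x
  | k'.+1 => A (n + k'.+1)%N (Acomp A n k' x)
  end.

Definition compl_fam {R : realType} {X : normedModType R}
  (P : nat -> X -> X) : nat -> X -> X := fun n x => x - P n x.

(* A_P(m,n) = A(m)...A(n+1)P(n) (m > n), A_P(n,n) = P(n); used only for m >= n *)
Definition calA {R : realType} {X : normedModType R}
  (A P : nat -> X -> X) (m n : nat) (x : X) : X :=
  Acomp A n (m - n) (P n x).

Definition P_exp_dichotomic {R : realType} {X : normedModType R}
  (A P : nat -> X -> X) : Prop :=
  exists N alpha beta : R, 1 <= N /\ 0 < alpha /\ 0 <= beta /\
    forall m n : nat, (0 < n)%N -> (n <= m)%N -> forall x : X,
      expR (alpha * (m%:R - n%:R)) *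
        (`|calA A P m n x| + `|compl_fam P n x|)
      <= N * (expR (beta * n%:R) * `|P n x|
              + expR (beta * m%:R) * `|calA A (compl_fam P) m n x|).

From HB Require Import structures.
From mathcomp Require Import all_boot all_order all_algebra.
From mathcomp Require Import all_classical all_reals all_analysis.
From mathcomp Require Import ring lra zify.
Set Implicit Arguments. Unset Strict Implicit. Unset Printing Implicit Defensive.
Import Order.TTheory GRing.Theory Num.Theory.
Import numFieldNormedType.Exports.
Local Open Scope ring_scope.

(* The evolution maps A_P and A_Q compose like a cocycle and take values in
   the range of P, resp. Q.  Applying the dichotomy estimate to the vector
   A_P(n,p)x (which has no Q-component) bounds every weighted term
   e^{alpha(j-n)} |A_P(j,p)x| by the same constant; likewise, applied to
   A_Q(k,n)x (which has no P-component) it bounds each e^{alpha(m-k)}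
   |A_Q(k,n)x|.  Halving the rate turns these uniform bounds into geometric
   series.  Conversely, with p = n the two sums dominate their terms j = m
   and k = n, which are the two terms of the dichotomy estimate. *)

Definition sum_dichotomic {R : realType} {X : normedModType R}
  (A P : nat -> X -> X) : Prop :=
  exists D d c : R, 1 <= D /\ 0 < d /\ 0 <= c /\
    forall m n p : nat, (0 < p)%N -> (p <= n)%N -> (n <= m)%N -> forall x : X,
      ((\sum_(n <= j <oo) (expR (d * (j%:R - n%:R)) * `|calA A P j p x|)%:E)
       + (\sum_(n <= k < m.+1)
            expR (d * (m%:R - k%:R)) * `|calA A (compl_fam P) k n x|)%:E <=
       (D * (expR (c * n%:R) * `|calA A P n p x|
             + expR (c * m%:R) * `|calA A (compl_fam P) m n x|))%:E)%E.

Section Cocycle.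
Variables (R : realType) (X : normedModType R) (A F : nat -> X -> X).
Hypothesis F_idem : forall n, (0 < n)%N -> forall x, F n (F n x) = F n x.
Hypothesis F_compat : forall n, (0 < n)%N -> forall x,
  A n.+1 (F n x) = F n.+1 (A n.+1 x).

Lemma AcompD n a b x : Acomp A n (a + b) x = Acomp A (n + a) b (Acomp A n a x).
Proof.
elim: b => [|b IH]; first by rewrite addn0.
by rewrite addnS /= IH !addnS addnA.
Qed.

Lemma Acomp_compat n k x : (0 < n)%N ->
  F (n + k)%N (Acomp A n k x) = Acomp A n k (F n x).
Proof.
move=> n_gt0; elim: k => [|k IH] /=; first by rewrite addn0.
by rewrite -IH addnS F_compat // addn_gt0 n_gt0.
Qed.

Lemma calA_comp m k n x : (0 < n)%N -> (n <= k)%N -> (k <= m)%N ->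
  calA A F m k (calA A F k n x) = calA A F m n x.
Proof.
move=> n_gt0 nk km; rewrite /calA.
have -> : F k (Acomp A n (k - n) (F n x)) = Acomp A n (k - n) (F n x).
  by rewrite -[in F k](subnKC nk) Acomp_compat // F_idem.
by rewrite (_ : m - n = (k - n) + (m - k))%N ?AcompD ?subnKC //; lia.
Qed.

Lemma calA_fixed k n x : (0 < n)%N -> (n <= k)%N ->
  F k (calA A F k n x) = calA A F k n x.
Proof.
move=> n_gt0 nk.
by rewrite -[in RHS](calA_comp x n_gt0 nk (leqnn k)) /calA subnn.
Qed.

End Cocycle.

Section Complement.
Variables (R : realType) (X : normedModType R) (A P : nat -> {linear X -> X}).
Local Notation Af := (fun i => A i : X -> X).
Local Notation Pf := (fun i => P i : X -> X).
Lemma Acomp0 n k : Acomp Af n k 0 = 0.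
Proof. by elim: k => [|k IH] //=; rewrite IH linear0. Qed.

Variable n : nat.
Hypothesis P_idem : forall x, P n (P n x) = P n x.

Lemma P_compl_fam x : P n (compl_fam Pf n x) = 0.
Proof. by rewrite /compl_fam linearB /= P_idem subrr. Qed.

Lemma compl_fam_idem x : compl_fam Pf n (compl_fam Pf n x) = compl_fam Pf n x.
Proof. by rewrite {1}/compl_fam P_compl_fam subr0. Qed.

Lemma compl_fam_compat x : (forall y, A n.+1 (P n y) = P n.+1 (A n.+1 y)) ->
  A n.+1 (compl_fam Pf n x) = compl_fam Pf n.+1 (A n.+1 x).
Proof. by move=> compat; rewrite /compl_fam linearB /= compat. Qed.

End Complement.

Section Geometric.
Variable R : realType.

Lemma geom_sum_le (r : R) n M : 0 <= r < 1 ->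
  \sum_(n <= j < M) r ^+ (j - n) <= (1 - r)^-1.
Proof.
case/andP=> r_ge0 r_lt1; have r1_gt0 : 0 < 1 - r by rewrite subr_gt0.
have [Mn|nM] := leqP M n; first by rewrite big_geq // invr_ge0 ltW.
rewrite -{1}(add0n n) big_addn.
rewrite (eq_bigr (fun i => r ^+ i)); last by move=> i _; rewrite addnK.
rewrite big_mkord -[X in _ <= X]mul1r ler_pdivlMr //.
have -> : (\sum_(i < M - n) r ^+ i) * (1 - r) = 1 - r ^+ (M - n).
  by rewrite mulrC -opprB mulNr -subrX1 opprB.
by rewrite lerBlDr lerDl exprn_ge0.
Qed.

Lemma expR_half_rate (a : R) (b c : nat) : (c <= b)%N ->
  expR (a / 2 * (b%:R - c%:R))
  = expR (a * (b%:R - c%:R)) * expR (- (a / 2)) ^+ (b - c).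
Proof. by move=> cb; rewrite -expRM_natl natrB // -expRD; congr expR; field. Qed.

Variables (a C : R).
Hypotheses (a_gt0 : 0 < a) (C_ge0 : 0 <= C).
Let r := expR (- (a / 2)).

Let r_bounds : 0 <= r < 1.
Proof. by rewrite expR_ge0 expR_lt1 oppr_lt0 divr_gt0. Qed.

Lemma nneseries_weighted_le (f : nat -> R) n :
  (forall j, (n <= j)%N -> 0 <= f j) ->
  (forall j, (n <= j)%N -> expR (a * (j%:R - n%:R)) * f j <= C) ->
  (\sum_(n <= j <oo) (expR (a / 2 * (j%:R - n%:R)) * f j)%:E
   <= (C / (1 - r))%:E)%E.
Proof.
move=> f_ge0 f_le; apply: lime_le.
  apply: is_cvg_nneseries => j nj _.
  by rewrite lee_fin mulr_ge0 ?expR_ge0 ?f_ge0.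
apply: nearW => M; rewrite sumEFin lee_fin.
apply: (@le_trans _ _ (\sum_(n <= j < M) r ^+ (j - n) * C)).
  apply: ler_sum_nat => j /andP[nj _].
  by rewrite expR_half_rate // mulrAC mulrC ler_wpM2l ?exprn_ge0 ?f_le.
by rewrite -big_distrl /= mulrC ler_wpM2l // geom_sum_le.
Qed.

Lemma sum_weighted_le (g : nat -> R) n m :
  (forall k, (n <= k)%N -> (k <= m)%N -> expR (a * (m%:R - k%:R)) * g k <= C) ->
  \sum_(n <= k < m.+1) expR (a / 2 * (m%:R - k%:R)) * g k <= C / (1 - r).
Proof.
move=> g_le; apply: (@le_trans _ _ (\sum_(n <= k < m.+1) r ^+ (m - k) * C)).
  apply: ler_sum_nat => k /andP[nk]; rewrite ltnS => km.
  by rewrite expR_half_rate // mulrAC mulrC ler_wpM2l ?exprn_ge0 ?g_le.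
rewrite -big_distrl /= mulrC ler_wpM2l // big_nat_rev /=.
rewrite (@eq_big_nat _ _ _ n m.+1 _ (fun k => r ^+ (k - n))) ?geom_sum_le //.
by move=> k /andP[nk km]; congr (_ ^+ _); lia.
Qed.

End Geometric.

Section ExpDichotomy.
Variables (R : realType) (X : normedModType R) (A P : nat -> {linear X -> X}).
Local Notation Af := (fun i => A i : X -> X).
Local Notation Pf := (fun i => P i : X -> X).
Local Notation Qf := (compl_fam Pf).
Hypothesis P_idem : forall n, (0 < n)%N -> forall x, P n (P n x) = P n x.
Hypothesis P_compat : forall n, (0 < n)%N -> forall x,
  A n.+1 (P n x) = P n.+1 (A n.+1 x).

Let Q_idem n : (0 < n)%N -> forall x, Qf n (Qf n x) = Qf n x.
Proof. by move=> n_gt0 x; apply: compl_fam_idem; apply: P_idem. Qed.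

Let Q_compat n : (0 < n)%N -> forall x, Af n.+1 (Qf n x) = Qf n.+1 (Af n.+1 x).
Proof. by move=> n_gt0 x; apply: compl_fam_compat; apply: P_compat. Qed.

Variables (N alpha beta : R).
Hypothesis dich : forall m n : nat, (0 < n)%N -> (n <= m)%N -> forall x : X,
  expR (alpha * (m%:R - n%:R)) * (`|calA Af Pf m n x| + `|Qf n x|)
  <= N * (expR (beta * n%:R) * `|P n x|
          + expR (beta * m%:R) * `|calA Af Qf m n x|).

Lemma dichotomy_stable_bound j n p x : (0 < p)%N -> (p <= n)%N -> (n <= j)%N ->
  expR (alpha * (j%:R - n%:R)) * `|calA Af Pf j p x|
  <= N * (expR (beta * n%:R) * `|calA Af Pf n p x|).
Proof.
move=> p_gt0 pn nj; have n_gt0 := leq_trans p_gt0 pn.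
set y := calA Af Pf n p x.
have Py : P n y = y by exact: (calA_fixed (F := Pf) P_idem P_compat).
have Qy : Qf n y = 0 by rewrite /compl_fam /= Py subrr.
have Qy_orbit : calA Af Qf j n y = 0 by rewrite /calA Qy Acomp0.
have := dich n_gt0 nj y; rewrite Qy Qy_orbit normr0 mulr0 !addr0 Py.
by rewrite (calA_comp (F := Pf) P_idem P_compat).
Qed.

Lemma dichotomy_unstable_bound m k n x : (0 < n)%N -> (n <= k)%N -> (k <= m)%N ->
  expR (alpha * (m%:R - k%:R)) * `|calA Af Qf k n x|
  <= N * (expR (beta * m%:R) * `|calA Af Qf m n x|).
Proof.
move=> n_gt0 nk km; have k_gt0 := leq_trans n_gt0 nk.
set y := calA Af Qf k n x.
have Qy : Qf k y = y by exact: (calA_fixed (F := Qf) Q_idem Q_compat).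
have Py : P k y = 0 by rewrite -Qy P_compl_fam //; exact: P_idem.
have := dich k_gt0 km y; rewrite Qy Py normr0 mulr0 add0r.
rewrite (calA_comp (F := Qf) Q_idem Q_compat) //; apply: le_trans.
by rewrite ler_wpM2l ?expR_ge0 // lerDr.
Qed.

End ExpDichotomy.

Lemma exp_dichotomic_sum_dichotomic (R : realType) (X : normedModType R)
  (A P : nat -> {linear X -> X}) :
  (forall n, (0 < n)%N -> forall x, P n (P n x) = P n x) ->
  (forall n, (0 < n)%N -> forall x, A n.+1 (P n x) = P n.+1 (A n.+1 x)) ->
  P_exp_dichotomic (fun n => A n : X -> X) (fun n => P n : X -> X) ->
  sum_dichotomic (fun n => A n : X -> X) (fun n => P n : X -> X).
Proof.
move=> P_idem P_compat [N [alpha [beta [N_ge1 [alpha_gt0 [beta_ge0 dich]]]]]].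
set r := expR (- (alpha / 2)).
have r_ge0 : 0 <= r by exact: expR_ge0.
have r1_gt0 : 0 < 1 - r by rewrite subr_gt0 expR_lt1 oppr_lt0 divr_gt0.
have N_ge0 : 0 <= N by lra.
exists (N / (1 - r)), (alpha / 2), beta.
split; first by rewrite ler_pdivlMr // mul1r; lra.
split; first by rewrite divr_gt0.
split=> // m n p p_gt0 pn nm x; have n_gt0 := leq_trans p_gt0 pn.
rewrite mulrDr EFinD [X in (_ <= X%:E + _)%E]mulrAC.
rewrite [X in (_ <= _ + X%:E)%E]mulrAC leeD //.
- apply: nneseries_weighted_le; rewrite ?mulr_ge0 ?expR_ge0 // => j nj.
  exact: dichotomy_stable_bound.
- rewrite lee_fin sum_weighted_le ?mulr_ge0 ?expR_ge0 // => k nk km.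
  exact: dichotomy_unstable_bound.
Qed.

Lemma sum_dichotomic_exp_dichotomic (R : realType) (X : normedModType R)
  (A P : nat -> X -> X) :
  sum_dichotomic A P -> P_exp_dichotomic A P.
Proof.
case=> D [d [c [D_ge1 [d_gt0 [c_ge0 sum_le]]]]].
exists (2 * D), d, c; split; first lra.
split=> //; split=> // m n n_gt0 nm x.
have := sum_le m n n n_gt0 (leqnn n) nm x.
rewrite [calA A P n n x]/calA subnn /=.
set B := D * _ => HB.
set t1 := expR (d * (m%:R - n%:R)) * `|calA A P m n x|.
set t2 := expR (d * (m%:R - n%:R)) * `|compl_fam P n x|.
pose u j := (expR (d * (j%:R - n%:R)) * `|calA A P j n x|)%:E.
have u_ge0 j : (n <= j)%N -> (0 <= u j)%E.
  by move=> _; rewrite lee_fin mulr_ge0 ?expR_ge0.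
have t1_le : (t1%:E <= \sum_(n <= j <oo) u j)%E.
  apply: le_trans (nneseries_lim_ge m.+1 (fun j h _ => u_ge0 j h)).
  rewrite big_nat_recr //= -[X in (X <= _)%E]add0e leeD //.
  by rewrite big_nat_cond; apply: sume_ge0 => j /andP[/andP[nj _] _]; apply: u_ge0.
have t2_le : t2 <= \sum_(n <= k < m.+1)
    expR (d * (m%:R - k%:R)) * `|calA A (compl_fam P) k n x|.
  rewrite big_ltn ?ltnS // /calA subnn /= -/t2 lerDl.
  by apply: sumr_ge0 => k _; rewrite mulr_ge0 ?expR_ge0.
have : (t1%:E + t2%:E <= B%:E)%E.
  by apply: le_trans HB; apply: leeD => //; rewrite lee_fin.
have B_ge0 : 0 <= B.
  by rewrite /B mulr_ge0 ?addr_ge0 ?mulr_ge0 ?expR_ge0 //; lra.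
rewrite -EFinD lee_fin (_ : 2 * D * _ = 2 * B); last by rewrite /B mulrA.
rewrite mulrDr -/t1 -/t2 => t12; lra.
Qed.

Theorem mainTheorem4 (R : realType) (X : completeNormedModType R)
  (A P : nat -> {linear X -> X})
  (hA : forall n : nat, (0 < n)%N -> continuous (A n))
  (hP : forall n : nat, (0 < n)%N -> continuous (P n))
  (hPproj : forall n : nat, (0 < n)%N -> forall x : X, P n (P n x) = P n x)
  (hcompat : forall n : nat, (0 < n)%N -> forall x : X,
      A n.+1 (P n x) = P n.+1 (A n.+1 x)) :
  P_exp_dichotomic (fun n => A n : X -> X) (fun n => P n : X -> X) <->
  exists D d c : R, 1 <= D /\ 0 < d /\ 0 <= c /\
    forall m n p : nat, (0 < p)%N -> (p <= n)%N -> (n <= m)%N -> forall x : X,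
      ((\sum_(n <= j <oo)
          (expR (d * (j%:R - n%:R)) *
             `|calA (fun i => A i : X -> X) (fun i => P i : X -> X) j p x|)%:E)
       + (\sum_(n <= k < m.+1)
          expR (d * (m%:R - k%:R)) *
             `|calA (fun i => A i : X -> X)
                 (compl_fam (fun i => P i : X -> X)) k n x|)%:E <=
       (D * (expR (c * n%:R) *
               `|calA (fun i => A i : X -> X) (fun i => P i : X -> X) n p x|
             + expR (c * m%:R) *
               `|calA (fun i => A i : X -> X)
                   (compl_fam (fun i => P i : X -> X)) m n x|))%:E)%E.
Proof.
split; first exact: exp_dichotomic_sum_dichotomic.
exact: sum_dichotomic_exp_dichotomic.
Qed.
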